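(* Let $\alpha,\beta,\gamma$ be real numbers with $\gamma\neq\alpha$, and let $A,B,C,D,E,F,X,X'$ be nonzero real numbers satisfying $$(\gamma-\alpha)XX'=(\beta-\alpha)BE+(\gamma-\beta)AD.$$ Define the ''old'' vertex variables $$a=(\beta-\alpha)\frac{BF}{AX},\qquad b=(\gamma-\alpha)\frac{CX}{BD},\qquad c=(\gamma-\beta)\frac{DF}{EX},$$ and the ''new'' vertex variables $$d=(\gamma-\beta)\frac{AC}{BX'},\qquad e=(\gamma-\alpha)\frac{FX'}{AE},\qquad f=(\beta-\alpha)\frac{CE}{DX'}.$$ Then, provided $a+c\neq 0$, $$d=\frac{bc}{a+c},\qquad e=a+c,\qquad f=\frac{ab}{a+c},$$ i.e. the exchange $X\mapsto X'$ of the chamber variable (the enriched Yang–Baxter move) induces Lusztig's Yang–Baxter move $(a,b,c)\mapsto(bc/(a+c),\,a+c,\,ab/(a+c))$ on the vertex variables.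
   Context: This is the algebraic content of a Yang–Baxter (braid) move on three wires with parameters $\alpha,\beta,\gamma$ in a wiring diagram: $A,\dots,F$ are the variables of the six chambers surrounding the hexagon formed by the three crossings, $X$ is the variable of the inner chamber before the move and $X'$ after; each crossing of two wires with parameters $\alpha'$ (lower wire) and $\beta'$ (upper wire) carries the vertex variable $(\beta'-\alpha')$ times the product of the variables of two opposite surrounding chambers divided by the product of the other two. *)

From Stdlib Require Import Reals.
Open Scope R_scope.

From Stdlib Require Import Reals.
Open Scope R_scope.

(* The products [d e = b c] and [e f = a b] are Laurent-monomial identities
   in which the inner chamber variables cancel, so they hold for any [X, X'];
   the exchange relation is needed only to identify [e] with [a + c].
   Dividing the two identities by [e = a + c] gives the move. *)

Lemma exchange_sum (alpha beta gamma A B D E F X X' : R) :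
  A <> 0 -> E <> 0 -> X <> 0 ->
  (gamma - alpha) * X * X' = (beta - alpha) * B * E + (gamma - beta) * A * D ->
  (gamma - alpha) * (F * X') / (A * E)
  = (beta - alpha) * (B * F) / (A * X) + (gamma - beta) * (D * F) / (E * X).
Proof.
  intros HA HE HX Hexch.
  replace ((gamma - alpha) * (F * X') / (A * E))
    with (F * ((gamma - alpha) * X * X') / (A * E * X)) by (field; repeat split; auto).
  rewrite Hexch. field; repeat split; auto.
Qed.

Lemma vertex_product_left (alpha beta gamma A B C D E F X X' : R) :
  A <> 0 -> B <> 0 -> D <> 0 -> E <> 0 -> X <> 0 -> X' <> 0 ->
  (gamma - beta) * (A * C) / (B * X') * ((gamma - alpha) * (F * X') / (A * E))
  = (gamma - alpha) * (C * X) / (B * D) * ((gamma - beta) * (D * F) / (E * X)).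
Proof. intros; field; repeat split; auto. Qed.

Lemma vertex_product_right (alpha beta gamma A B C D E F X X' : R) :
  A <> 0 -> B <> 0 -> D <> 0 -> E <> 0 -> X <> 0 -> X' <> 0 ->
  (beta - alpha) * (C * E) / (D * X') * ((gamma - alpha) * (F * X') / (A * E))
  = (beta - alpha) * (B * F) / (A * X) * ((gamma - alpha) * (C * X) / (B * D)).
Proof. intros; field; repeat split; auto. Qed.

Lemma eq_div_of_mul_eq (x y z : R) : z <> 0 -> x * z = y -> x = y / z.
Proof. intros Hz <-. field; exact Hz. Qed.

Theorem lemma3p1 (alpha beta gamma A B C D E F X X' : R) :
  gamma <> alpha ->
  A <> 0 -> B <> 0 -> C <> 0 -> D <> 0 -> E <> 0 -> F <> 0 ->
  X <> 0 -> X' <> 0 ->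
  (gamma - alpha) * X * X' = (beta - alpha) * B * E + (gamma - beta) * A * D ->
  let a := (beta - alpha) * (B * F) / (A * X) in
  let b := (gamma - alpha) * (C * X) / (B * D) in
  let c := (gamma - beta) * (D * F) / (E * X) in
  let d := (gamma - beta) * (A * C) / (B * X') in
  let e := (gamma - alpha) * (F * X') / (A * E) in
  let f := (beta - alpha) * (C * E) / (D * X') in
  a + c <> 0 ->
  d = b * c / (a + c) /\ e = a + c /\ f = a * b / (a + c).
Proof.
  intros _ HA HB _ HD HE _ HX HX' Hexch a b c d e f Hac.
  assert (He : e = a + c) by exact (exchange_sum _ _ _ _ _ _ _ _ _ _ HA HE HX Hexch).
  split; [| split; [exact He |]]; apply eq_div_of_mul_eq; auto; rewrite <- He.
  - exact (vertex_product_left alpha beta gamma A B C D E F X X' HA HB HD HE HX HX').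
  - exact (vertex_product_right alpha beta gamma A B C D E F X X' HA HB HD HE HX HX').
Qed.
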